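(* Let $G$ be a 2-arc-colored directed multigraph. If $C$ is a minimal PC Euler subgraph of $G$, then $C$ is a PC circuit.
   Context: $G$ has an arbitrary arc coloring $\phi:A(G)\to\{1,2\}$. Trails are directed walks without repeated arcs; a closed trail is properly colored (PC) if every two consecutive arcs, including the last and first arcs, have different colors. A (multi)digraph is PC Euler if it has a PC closed trail containing all of its arcs. A PC Euler subgraph of $G$ is a subgraph (with at least one arc) that is PC Euler; it is minimal if no proper subgraph of it is PC Euler. A PC circuit is a subgraph $C$ of $G$ that is PC Euler and satisfies $d^+_{1,C}(v)\le1$ and $d^+_{2,C}(v)\le 1$ for all $v\in V(C)$, where $d^+_{i,C}(v)$ is the number of arcs of color $i$ in $C$ leaving $v$. *)

From mathcomp Require Import all_boot.
Set Implicit Arguments. Unset Strict Implicit. Unset Printing Implicit Defensive.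

(* A 2-arc-coloured directed multigraph is given by a finite vertex type V,
   a finite arc type A (parallel arcs and loops allowed), tail/head maps
   tl hd : A -> V and a colouring col : A -> bool (false = colour 1,
   true = colour 2).  A subgraph is given by its arc set S : {set A}; its
   vertex set is the set of endpoints of its arcs. *)

Section PC.
Variables (V A : finType) (tl hd : A -> V) (col : A -> bool).

Definition pc_step (a b : A) : bool := (hd a == tl b) && (col a != col b).

Definition pc_closed_trail (s : seq A) : bool :=
  [&& s != [::], uniq s & cycle pc_step s].

Definition pc_euler (S : {set A}) : Prop :=
  exists s : seq A, pc_closed_trail s /\ [set a in s] = S.

Definition minimal_pc_euler (C : {set A}) : Prop :=
  pc_euler C /\ forall S : {set A}, S \proper C -> ~ pc_euler S.

Definition out_deg_col (C : {set A}) (c : bool) (v : V) : nat :=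
  #|[set a in C | (tl a == v) && (col a == c)]|.

Definition vert (C : {set A}) : {set V} := [set v | [exists a in C, (tl a == v) || (hd a == v)]].

Definition pc_circuit (C : {set A}) : Prop :=
  pc_euler C /\ forall v, v \in vert C -> forall c : bool, out_deg_col C c v <= 1.

End PC.

From mathcomp Require Import all_boot.

Set Implicit Arguments.
Unset Strict Implicit.

(* If a PC closed trail used two distinct arcs a, b of the same colour
   leaving the same vertex, then jumping from the arc entering b's tail
   straight to a instead of b closes the trail early; this shorter PC closed
   trail avoids b, so its arc set is a proper PC Euler subgraph. *)

Section Shortcut.
Variables (V A : finType) (tl hd : A -> V) (col : A -> bool).

Local Notation pc_trail := (pc_closed_trail tl hd col).

Lemma pc_closed_trail_rot (n : nat) (s : seq A) : pc_trail (rot n s) = pc_trail s.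
Proof. by rewrite /pc_closed_trail rot_uniq rot_cycle -size_eq0 size_rot size_eq0. Qed.

Lemma pc_closed_trail_cut (a b : A) (p q : seq A) :
  tl a = tl b -> col a = col b ->
  pc_trail (a :: p ++ b :: q) -> pc_trail (a :: p).
Proof.
move=> tl_ab col_ab /and3P [_ uniq_s cycle_s].
have uniq_ap : uniq (a :: p) by move: uniq_s; rewrite -cat_cons cat_uniq => /andP [].
move: cycle_s; rewrite /cycle /= rcons_cat cat_path /=.
case/and3P=> path_ap step_b _.
apply/and3P; split=> //; rewrite /cycle rcons_path path_ap /=.
by move: step_b; rewrite /pc_step tl_ab col_ab.
Qed.

Lemma pc_closed_trail_shortcut (s : seq A) (a b : A) :
  pc_trail s -> a \in s -> b \in s -> a != b ->
  tl a = tl b -> col a = col b ->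
  exists2 s' : seq A, pc_trail s' & [set x in s'] \proper [set x in s].
Proof.
move=> trail_s a_s b_s neq_ab tl_ab col_ab.
case: (rot_to a_s) => i t rot_s.
have mem_rot_s : s =i a :: t by move=> x; rewrite -rot_s mem_rot.
have trail_at : pc_trail (a :: t) by rewrite -rot_s pc_closed_trail_rot.
have b_t : b \in t by move: b_s; rewrite mem_rot_s inE eq_sym (negbTE neq_ab).
move: trail_at mem_rot_s; case/splitPr: b_t => p q trail_at mem_rot_s.
exists (a :: p); first exact: pc_closed_trail_cut trail_at.
have b_notin_ap : b \notin a :: p.
  case/and3P: trail_at => _ + _.
  by rewrite -cat_cons cat_uniq => /and3P [_ /hasPn /(_ b (mem_head _ _))].
apply/properP; split.
- apply/subsetP=> x; rewrite !inE mem_rot_s !inE mem_cat.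
  by case/orP=> [-> | ->]; rewrite ?orbT.
- by exists b; rewrite inE.
Qed.

End Shortcut.

Theorem corollary1 (V A : finType) (tl hd : A -> V) (col : A -> bool)
  (C : {set A}) :
  minimal_pc_euler tl hd col C -> pc_circuit tl hd col C.
Proof.
move=> [[s [trail_s set_s]] min_C]; split; first by exists s.
move=> v _ c; rewrite leqNgt; apply/negP => /card_gt1P [a [b [+ + neq_ab]]].
rewrite !inE -set_s !inE => /and3P [a_s /eqP tl_a /eqP col_a] /and3P [b_s /eqP tl_b /eqP col_b].
have [s' trail_s' proper_s'] := pc_closed_trail_shortcut trail_s a_s b_s neq_ab
  (etrans tl_a (esym tl_b)) (etrans col_a (esym col_b)).
by apply: (min_C [set x in s']); [rewrite -set_s | exists s'].
Qed.
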